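(* Let $b \geq 2$, $s \geq 1$ and $m \geq 1$ be integers, and let $\mathcal{P} = \{\boldsymbol{x}_0,\dots,\boldsymbol{x}_{b^m-1}\}$ be a family of $b^m$ points in $[0,1)^s$. Then $\mathcal{P}$ is $s$-admissible in base $b$ if and only if $\mathcal{P}$ is a $(0,m,s)$-net in base $b$. Moreover, $\mathcal{P}$ is not $d$-admissible in base $b$ for any integer $d < s$.
   Context: A $(0,m,s)$-net in base $b$ is a family of $b^m$ points in $[0,1)^s$ such that every interval $\prod_{i=1}^s [a_i b^{-d_i},(a_i+1)b^{-d_i})$ with $d_i \in \mathbb{N}_0$, $a_i \in \{0,\dots,b^{d_i}-1\}$ and volume $b^{-m}$ contains exactly one point of the family. Each $x \in [0,1)$ is written in its $b$-adic expansion $x = \sum_{i\geq 1} x_i b^{-i}$, $x_i \in \{0,\dots,b-1\}$ (not ending in infinitely many digits $b-1$). For $x, y \in [0,1)$, $x \ominus y = \sum_{i \geq 1} z_i b^{-i}$ with $z_i \equiv x_i - y_i \pmod b$, $z_i \in\{0,\dots,b-1\}$. For $z = \sum_{i\geq1} z_i b^{-i}$ with $z_1=\dots=z_k=0$ and $z_{k+1}\neq 0$, set $\|z\|_b = b^{-(k+1)}$, and $\|z\|_b = 0$ if all digits vanish. For points $\boldsymbol{x}=(x^{(1)},\dots,x^{(s)})$, $\boldsymbol{y}$, let $\boldsymbol{x}\ominus\boldsymbol{y} = (x^{(1)}\ominus y^{(1)},\dots,x^{(s)}\ominus y^{(s)})$ and $\|\boldsymbol{z}\|_b = \prod_{j=1}^s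 \|z^{(j)}\|_b$. For an integer $d$, the family $\mathcal{P}$ is $d$-admissible in base $b$ if $\min_{0 \leq k < n < b^m} \|\boldsymbol{x}_n \ominus \boldsymbol{x}_k\|_b > b^{-(m+d)}$. *)

From HB Require Import structures.
From mathcomp Require Import all_boot all_order all_algebra.
From mathcomp Require Import reals.
From Stdlib Require Import ClassicalEpsilon.
Set Implicit Arguments. Unset Strict Implicit. Unset Printing Implicit Defensive.
Import Order.TTheory GRing.Theory Num.Theory.
Local Open Scope ring_scope.

Section Defs.
Variable R : realType.

(* i-th b-adic digit (i >= 1) of x in [0,1): x_i = floor(x b^i) mod b.
   This is the expansion not ending in infinitely many digits b-1. *)
Definition bdigit (b : nat) (x : R) (i : nat) : int :=
  (Num.floor (x * (b%:R) ^+ i) %% (b%:Z))%Z.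

Definition bsub_digit (b : nat) (x y : R) (i : nat) : int :=
  ((bdigit b x i - bdigit b y i) %% (b%:Z))%Z.

Definition bnorm_digits (b : nat) (z : nat -> int) : R :=
  match excluded_middle_informative (exists i, (0 < i)%N && (z i != 0)) with
  | left ex => ((b%:R) ^+ (ex_minn ex))^-1
  | right _ => 0
  end.

Definition bnorm_sub (b : nat) (x y : R) : R := bnorm_digits b (bsub_digit b x y).

Definition bnorm_sub_pt (b s : nat) (x y : 'I_s -> R) : R :=
  \prod_(j < s) bnorm_sub b (x j) (y j).

(* d-admissibility: min_{0 <= k < n < b^m} ||x_n (-) x_k||_b > b^{-(m+d)}
   (the min is over a nonempty finite set when b^m >= 2, so this is the
   statement that every such pair exceeds the bound). *)
Definition admissible (b m s : nat) (P : 'I_(b ^ m) -> 'I_s -> R) (d : int) : Prop :=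
  forall k n : 'I_(b ^ m), (k < n)%N ->
    bnorm_sub_pt b (P n) (P k) > (b%:R) ^ (- (m%:Z + d)).

Definition in_elem_box (b s : nat) (dd aa : 'I_s -> nat) (x : 'I_s -> R) : bool :=
  [forall j, ((aa j)%:R / (b%:R) ^+ (dd j) <= x j) &&
             (x j < (aa j).+1%:R / (b%:R) ^+ (dd j))].

(* (0,m,s)-net in base b: every elementary interval of volume b^{-m}
   (i.e. sum_j d_j = m) contains exactly one point of the family. *)
Definition is_net0 (b m s : nat) (P : 'I_(b ^ m) -> 'I_s -> R) : Prop :=
  forall dd aa : 'I_s -> nat,
    (\sum_(j < s) dd j)%N = m ->
    (forall j, (aa j < b ^ dd j)%N) ->
    #|[set n : 'I_(b ^ m) | in_elem_box b dd aa (P n)]| = 1%N.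

End Defs.

Arguments admissible {R} b m s P d.
Arguments is_net0 {R} b m s P.

From HB Require Import structures.
From mathcomp Require Import all_boot all_order all_algebra.
From mathcomp Require Import reals.
From mathcomp Require Import zify lra.
From Stdlib Require Import ClassicalEpsilon.
Set Implicit Arguments. Unset Strict Implicit. Unset Printing Implicit Defensive.
Import Order.TTheory GRing.Theory Num.Theory.
Local Open Scope ring_scope.

(* The integer floor(x b^i) is formed by the first i digits of x. If x and y
   share their first k digits then ||x (-) y||_b <= b^-(k+1), otherwise
   ||x (-) y||_b >= b^-k; and x lies in the elementary interval given by d_j, a_j
   iff floor(x^(j) b^(d_j)) = a_j for all j. Hence two points of an
   s-admissible family never share an elementary interval of volume b^-m, and
   since for each choice of the d_j there are b^m such intervals and b^m
   points, each interval contains exactly one point. Conversely, if two points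
   of a net share l_j digits in coordinate j, then sum l_j < m (otherwise some
   elementary interval of volume b^-m would contain both), so their distance is
   at least b^-(sum l_j + s) > b^-(m+s). Finally, by pigeonhole two of the b^m
   points share the first m-1 digits of their first coordinate, so their
   distance is at most b^-m b^-(s-1) <= b^-(m+d) for every d < s. *)

Lemma exists_leq_sum_eq (I : finType) (e : I -> nat) m :
  (m <= \sum_i e i)%N ->
  exists dd : I -> nat, (forall i, dd i <= e i)%N /\ (\sum_i dd i)%N = m.
Proof.
elim: m => [|m IH] le_m_sum.
  by exists (fun _ => 0%N); split => //; rewrite big1.
have [dd [le_dd_e sum_dd]] := IH (ltnW le_m_sum).
case: (pickP (fun i => dd i < e i)%N) => [j lt_j|all_ge]; last first.
  suff : (\sum_i e i <= \sum_i dd i)%N by lia.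
  by apply: leq_sum => i _; rewrite leqNgt all_ge.
exists (fun i => dd i + (i == j))%N; split.
  by move=> i; case: eqP => [->|_]; rewrite ?addn1 ?addn0.
rewrite big_split /= sum_dd (bigD1 j) //= eqxx big1 ?addn0 ?addn1 //.
by move=> i /negbTE ->.
Qed.

Section Digits.
Variables (R : realType) (b : nat).
Hypothesis b_gt1 : (1 < b)%N.

Local Notation B := (b%:R : R).
Local Notation q := (b%:R^-1 : R).

Lemma B_gt0 : 0 < B. Proof. by rewrite ltr0n; lia. Qed.
Lemma q_gt0 : 0 < q. Proof. by rewrite invr_gt0 B_gt0. Qed.
Lemma q_lt1 : q < 1. Proof. by rewrite invf_lt1 ?B_gt0 // ltr1n. Qed.

Lemma expB_neg n : B ^ (- n%:Z) = q ^+ n.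
Proof. by rewrite -exprz_inv. Qed.

Definition bprefix (x : R) (i : nat) : int := Num.floor (x * B ^+ i).

Lemma bprefix_divS (x : R) i : (bprefix x i.+1 %/ b%:Z)%Z = bprefix x i.
Proof.
rewrite /bprefix; set F := Num.floor _.
set Q := (F %/ b%:Z)%Z; set r := (F %% b%:Z)%Z.
have B_intr : (b%:Z)%:~R = B by rewrite pmulrn.
have r_ge0 : 0 <= r by apply: modz_ge0; apply/eqP; lia.
have r_lt : r + 1 <= b%:Z by have := ltz_pmod F (_ : 0 < b%:Z); rewrite -/r; lia.
have F_eq : (F%:~R : R) = Q%:~R * B + r%:~R.
  by rewrite [F](divz_eq F b%:Z) rmorphD rmorphM /= B_intr.
have r_ge0R : (0 : R) <= r%:~R by rewrite ler0z.
have r_ltR : (r%:~R : R) + 1 <= B by rewrite -B_intr -[1]/(1%:~R) -rmorphD ler_int.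
have /andP[F_le lt_F] := floor_itv (x * B ^+ i.+1).
rewrite -/F exprSr mulrA rmorphD /= in F_le lt_F.
symmetry; apply: floor_def; rewrite rmorphD /=; apply/andP; split.
  by rewrite -(ler_pM2r B_gt0); lra.
by rewrite -(ltr_pM2r B_gt0); lra.
Qed.

Lemma bprefixS (x : R) i : bprefix x i.+1 = b%:Z * bprefix x i + bdigit b x i.+1.
Proof. by rewrite {1}(divz_eq (bprefix x i.+1) b%:Z) bprefix_divS mulrC. Qed.

Lemma bprefix0 (x : R) : 0 <= x < 1 -> bprefix x 0 = 0.
Proof. by move=> x01; rewrite /bprefix mulr1; apply: floor_def; rewrite add0r. Qed.

Lemma bprefix_ge0 (x : R) i : 0 <= x -> 0 <= bprefix x i.
Proof. by move=> x_ge0; rewrite floor_ge0 mulr_ge0 ?exprn_ge0 ?(ltW B_gt0). Qed.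

Lemma bprefix_lt (x : R) i : x < 1 -> bprefix x i < (b ^ i)%N.
Proof.
move=> x_lt1; rewrite /bprefix floor_lt_int -pmulrn natrX.
by rewrite -[X in _ < X]mul1r ltr_pM2r // exprn_gt0 // B_gt0.
Qed.

Definition same_prefix (x y : R) (i : nat) : bool := bprefix x i == bprefix y i.

Lemma bsub_digit_eq0 (x y : R) i :
  (bsub_digit b x y i == 0) = (bdigit b x i == bdigit b y i).
Proof.
rewrite /bsub_digit (sameP eqP dvdz_mod0P) -eqz_mod_dvd.
by rewrite /bdigit !modz_mod.
Qed.

Lemma same_prefixS (x y : R) i :
  same_prefix x y i.+1 = same_prefix x y i && (bsub_digit b x y i.+1 == 0).
Proof.
rewrite bsub_digit_eq0 /same_prefix; apply/eqP/andP => [eq_pref|[/eqP eq_pref /eqP eq_dig]].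
  by rewrite -(bprefix_divS x) -(bprefix_divS y) eq_pref /bdigit -!/(bprefix _ _) eq_pref.
by rewrite !bprefixS eq_pref eq_dig.
Qed.

Lemma same_prefix0 (x y : R) : 0 <= x < 1 -> 0 <= y < 1 -> same_prefix x y 0.
Proof. by move=> x01 y01; rewrite /same_prefix !bprefix0. Qed.

Lemma same_prefix_le (x y : R) i j :
  (j <= i)%N -> same_prefix x y i -> same_prefix x y j.
Proof.
elim: i => [|i IH]; first by rewrite leqn0 => /eqP ->.
rewrite leq_eqVlt ltnS => /orP[/eqP -> //|le_ji].
by rewrite same_prefixS => /andP[/(IH le_ji)].
Qed.

Lemma same_prefix_digit0 (x y : R) i j :
  same_prefix x y i -> (0 < j <= i)%N -> bsub_digit b x y j = 0.
Proof.
case: j => // j pref_i /andP[_ le_ji].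
by move: (same_prefix_le le_ji pref_i); rewrite same_prefixS => /andP[_ /eqP].
Qed.

Lemma diff_prefix_digit (x y : R) i : 0 <= x < 1 -> 0 <= y < 1 ->
  ~~ same_prefix x y i -> exists2 j, (0 < j <= i)%N & bsub_digit b x y j != 0.
Proof.
move=> x01 y01; elim: i => [|i IH]; first by rewrite same_prefix0.
rewrite same_prefixS negb_and => /orP[/IH[j /andP[j_gt0 le_ji] dig_j]|dig_i].
  by exists j; rewrite ?j_gt0 ?(leqW le_ji).
by exists i.+1; rewrite ?leqnn.
Qed.

Lemma longest_same_prefix (x y : R) m : 0 <= x < 1 -> 0 <= y < 1 ->
  exists2 l, (l <= m)%N &
    same_prefix x y l /\ ((l < m)%N -> ~~ same_prefix x y l.+1).
Proof.
move=> x01 y01; elim: m => [|m [l le_lm [pref_l max_l]]].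
  by exists 0%N => //; split; [exact: same_prefix0|].
have [lt_lm|ge_lm] := ltnP l m.
  by exists l; [exact: leqW|split=> // _; apply: max_l].
have -> : m = l by apply/eqP; rewrite eqn_leq ge_lm.
have [pref_l1|diff_l1] := boolP (same_prefix x y l.+1).
  by exists l.+1 => //; split=> //; rewrite ltnn.
by exists l => //; split.
Qed.

Lemma bnorm_sub_ge0 (x y : R) : 0 <= bnorm_sub b x y.
Proof.
rewrite /bnorm_sub /bnorm_digits; case: excluded_middle_informative => // ex.
by rewrite invr_ge0 exprn_ge0 ?(ltW B_gt0).
Qed.

Lemma bnorm_sub_le (x y : R) k :
  same_prefix x y k -> bnorm_sub b x y <= q ^+ k.+1.
Proof.
move=> pref_k; rewrite /bnorm_sub /bnorm_digits.
case: excluded_middle_informative => [ex|_]; last by rewrite exprn_ge0 ?(ltW q_gt0).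
case: ex_minnP => i /andP[i_gt0 dig_i] _.
rewrite -exprVn ler_wiXn2l ?(ltW q_gt0) ?(ltW q_lt1) // ltnNge.
apply: contra dig_i => le_ik.
by rewrite (same_prefix_digit0 pref_k) ?i_gt0.
Qed.

Lemma bnorm_sub_ge (x y : R) k : 0 <= x < 1 -> 0 <= y < 1 ->
  ~~ same_prefix x y k -> q ^+ k <= bnorm_sub b x y.
Proof.
move=> x01 y01 /(diff_prefix_digit x01 y01)[j /andP[j_gt0 le_jk] dig_j].
rewrite /bnorm_sub /bnorm_digits; case: excluded_middle_informative => [ex|no_ex].
  case: ex_minnP => i _ min_i; have le_ij : (i <= j)%N by rewrite min_i ?j_gt0.
  by rewrite -exprVn ler_wiXn2l ?(ltW q_gt0) ?(ltW q_lt1) //; apply: leq_trans le_jk.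
by case: no_ex; exists j; rewrite j_gt0.
Qed.

Lemma bnorm_sub_pt_le s (x y : 'I_s -> R) (c : 'I_s -> nat) :
  (forall j, same_prefix (x j) (y j) (c j)) ->
  bnorm_sub_pt b x y <= q ^+ (\sum_j c j + s).
Proof.
move=> pref; rewrite -[s in (_ + s)%N]card_ord -sum1_card -big_split -prodrXr.
by apply: ler_prod => j _; rewrite bnorm_sub_ge0 /= addn1 bnorm_sub_le.
Qed.

Lemma bnorm_sub_pt_ge s (x y : 'I_s -> R) (c : 'I_s -> nat) :
  (forall j, 0 <= x j < 1) -> (forall j, 0 <= y j < 1) ->
  (forall j, ~~ same_prefix (x j) (y j) (c j).+1) ->
  q ^+ (\sum_j c j + s) <= bnorm_sub_pt b x y.
Proof.
move=> x01 y01 diff; rewrite -[s in (_ + s)%N]card_ord -sum1_card -big_split -prodrXr.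
apply: ler_prod => j _; rewrite exprn_ge0 ?(ltW q_gt0) //= addn1.
exact: bnorm_sub_ge.
Qed.

Lemma expb_gt0 i : (0 < b ^ i)%N.
Proof. by rewrite expn_gt0 ltnW. Qed.

(* The reduction modulo b^i only serves to land in 'I_(b^i): it is the
   identity on [0,1) (bcellE). *)
Definition bcell (x : R) (i : nat) : 'I_(b ^ i) :=
  Ordinal (ltn_pmod `|bprefix x i|%N (expb_gt0 i)).

Lemma bcellE (x : R) i : 0 <= x < 1 -> bcell x i = `|bprefix x i|%N :> nat.
Proof.
case/andP=> x_ge0 x_lt1; rewrite /= modn_small //.
by have := bprefix_lt i x_lt1; have := bprefix_ge0 i x_ge0; lia.
Qed.

Lemma bcell_eq (x y : R) i : 0 <= x < 1 -> 0 <= y < 1 ->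
  (bcell x i == bcell y i) = same_prefix x y i.
Proof.
move=> x01 y01; rewrite -[LHS]/(bcell x i == bcell y i :> nat) !bcellE // /same_prefix.
by have := bprefix_ge0 i (proj1 (andP x01)); have := bprefix_ge0 i (proj1 (andP y01)); lia.
Qed.

Lemma in_elem_boxE s dd aa (x : 'I_s -> R) : (forall j, 0 <= x j < 1) ->
  in_elem_box b dd aa x = [forall j, bcell (x j) (dd j) == aa j :> nat].
Proof.
move=> x01; apply: eq_forallb => j; rewrite bcellE //.
have pref_ge0 := bprefix_ge0 (dd j) (proj1 (andP (x01 j))).
have -> : (`|bprefix (x j) (dd j)|%N == aa j) = (bprefix (x j) (dd j) == aa j)
  by apply/eqP/eqP; lia.
have B_dd_gt0 : 0 < B ^+ dd j by rewrite exprn_gt0 ?B_gt0.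
rewrite floor_eq rmorphD /= pmulrn -[(aa j).+1%:R]natr1.
by rewrite ler_pdivrMr // ltr_pdivlMr.
Qed.

Section Nets.
Variables (s m : nat) (P : 'I_(b ^ m) -> 'I_s -> R).
Hypothesis P01 : forall n j, 0 <= P n j < 1.

Lemma admissible_box_uniq dd aa n1 n2 : admissible b m s P s ->
  (\sum_j dd j)%N = m ->
  in_elem_box b dd aa (P n1) -> in_elem_box b dd aa (P n2) -> n1 = n2.
Proof.
move=> adm sum_dd.
wlog lt_n12 : n1 n2 / (n1 < n2)%N => [wlog_lt|].
  case: (ltngtP n1 n2) => [/wlog_lt //|lt_n21 box1 box2|/val_inj //].
  by rewrite (wlog_lt n2 n1).
rewrite !in_elem_boxE // => /forallP box1 /forallP box2.
have := adm n1 n2 lt_n12; rewrite -PoszD expB_neg.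
rewrite -{1}sum_dd ltNge bnorm_sub_pt_le // => j.
by rewrite -bcell_eq //; apply/eqP/ord_inj; rewrite (eqP (box1 j)) (eqP (box2 j)).
Qed.

Lemma net_of_admissible : admissible b m s P s -> is_net0 b m s P.
Proof.
move=> adm dd aa sum_dd lt_aa.
pose cells n : {dffun forall j, 'I_(b ^ dd j)} := [ffun j => bcell (P n j) (dd j)].
have in_cells_box n : in_elem_box b dd (fun j => cells n j) (P n).
  by rewrite in_elem_boxE //; apply/forallP => j; rewrite ffunE.
have cells_inj : injective cells.
  move=> n1 n2 eq_cells; apply: (admissible_box_uniq adm sum_dd (in_cells_box n1)).
  by rewrite eq_cells.
have card_cells : #|{dffun forall j, 'I_(b ^ dd j)}| = (b ^ m)%N.
  rewrite card_dep_ffun foldrE big_map big_enum /=.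
  by under eq_bigr do rewrite card_ord; rewrite -expn_sum sum_dd.
have /codomP[n cells_n] := inj_card_onto cells_inj
  (eq_leq (etrans card_cells (esym (card_ord _)))) [ffun j => Ordinal (lt_aa j)].
apply/eqP/cards1P; exists n; apply/setP => n'; rewrite !inE.
have box_n : in_elem_box b dd aa (P n).
  rewrite in_elem_boxE //; apply/forallP => j.
  have := congr1 (fun f : {dffun forall j, 'I_(b ^ dd j)} => nat_of_ord (f j)) cells_n.
  by rewrite !ffunE /= => ->.
apply/idP/eqP => [box_n'|->//]; exact: admissible_box_uniq adm sum_dd box_n' box_n.
Qed.

Lemma admissible_of_net : is_net0 b m s P -> admissible b m s P s.
Proof.
move=> net k n lt_kn; rewrite -PoszD expB_neg.
have [l le_lm /all_and2[pref_l max_l]] : exists2 l : 'I_s -> nat, forall j, (l j <= m)%N &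
    forall j, same_prefix (P n j) (P k j) (l j) /\
              ((l j < m)%N -> ~~ same_prefix (P n j) (P k j) (l j).+1).
  exact: fin_all_exists2 (fun j => longest_same_prefix m (P01 n j) (P01 k j)).
have [/exists_leq_sum_eq[dd [le_dd_l sum_dd]]|lt_sum_m] := leqP m (\sum_j l j).
  pose aa j := nat_of_ord (bcell (P n j) (dd j)).
  have box_n : in_elem_box b dd aa (P n) by rewrite in_elem_boxE //; apply/forallP.
  have box_k : in_elem_box b dd aa (P k).
    rewrite in_elem_boxE //; apply/forallP => j; rewrite /aa eq_sym.
    by rewrite -[_ == _]/(_ == _ :> 'I__) bcell_eq // (same_prefix_le (le_dd_l j)).
  have := net dd aa sum_dd (fun j => ltn_ord _).
  move/eqP/cards1P => [n0 /setP cell_n0].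
  have /set1P eq_n : n \in [set n0] by rewrite -cell_n0 inE.
  have /set1P eq_k : k \in [set n0] by rewrite -cell_n0 inE.
  by rewrite eq_n eq_k ltnn in lt_kn.
have lt_lm j : (l j < m)%N.
  by apply: leq_ltn_trans lt_sum_m; rewrite (bigD1 j) //= leq_addr.
apply: lt_le_trans (bnorm_sub_pt_ge _ _ (fun j => max_l j (lt_lm j))) => //.
by rewrite ltr_iXn2l ?q_gt0 ?q_lt1 // ltn_add2r.
Qed.

Lemma not_admissible_lt (d : int) : (0 < s)%N -> (0 < m)%N ->
  d < s%:Z -> ~ admissible b m s P d.
Proof.
move=> s_gt0 m_gt0 lt_ds adm; pose j0 : 'I_s := Ordinal s_gt0.
pose cell n := bcell (P n j0) m.-1.
have /injectivePn[n1 [n2 neq_n12 eq_cell]] : ~~ injectiveb cell.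
  have lt_pow : (b ^ m.-1 < b ^ m)%N by rewrite ltn_exp2l //; lia.
  by apply/negP => /injectiveP/leq_card; rewrite !card_ord leqNgt lt_pow.
wlog lt_n12 : n1 n2 neq_n12 eq_cell / (n1 < n2)%N => [wlog_lt|].
  have [lt12|lt21|/val_inj eq12] := ltngtP n1 n2.
  - exact: wlog_lt neq_n12 eq_cell lt12.
  - by apply: (wlog_lt n2 n1) => //; rewrite eq_sym.
  - by rewrite eq12 eqxx in neq_n12.
have pref j : same_prefix (P n2 j) (P n1 j) ((j == j0) * m.-1).
  case: eqP => [->|_]; last exact: same_prefix0.
  by rewrite mul1n -bcell_eq // -/(cell n1) -/(cell n2) eq_cell.
move: (adm n1 n2 lt_n12); apply/negP; rewrite -leNgt.
apply: le_trans (bnorm_sub_pt_le pref) _.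
rewrite (bigD1 j0) //= mul1n big1 ?addn0 => [|j /negbTE->//].
rewrite -expB_neg ler_weXz2l ?ler1n 1?ltnW //.
by rewrite -(prednK m_gt0); lia.
Qed.

End Nets.
End Digits.

Theorem lemma2p1 (R : realType) (b s m : nat)
  (hb : (2 <= b)%N) (hs : (1 <= s)%N) (hm : (1 <= m)%N)
  (P : 'I_(b ^ m) -> 'I_s -> R)
  (hP : forall n j, 0 <= P n j < 1) :
  (admissible b m s P s%:Z <-> is_net0 b m s P) /\
  (forall d : int, d < s%:Z -> ~ admissible b m s P d).
Proof.
split; first split.
- exact: net_of_admissible.
- exact: admissible_of_net.
- by move=> d; apply: not_admissible_lt.
Qed.
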